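(* Let $\Sigma,\Gamma$ be finite alphabets, each with at least two letters. For every infinite word $w\in\Sigma^{\mathbb{N}}$, $$\mathrm{ACE}_{\mathcal{I}}(w) = \sup_{h\in\mathcal{I}}\Big(\limsup_{n\to\infty}\sup\{\mathrm{E}(h(f)) : f\in\mathrm{Fact}_n(w)\}\Big).$$
   Context: $\mathrm{Fact}_n(w)$ is the set of length-$n$ factors of $w$. For a nonempty word $v$ and integer $p\ge0$, $v^{p/|v|}$ is the prefix of length $p$ of $vvv\cdots$. For a nonempty finite word $u$, $\mathrm{E}(u) = \sup\{ r \in \mathbb{Q} : u = v^r \text{ for some nonempty } v\}$. For an infinite word $w$, $\mathrm{ACE}(w) = \limsup_{n\to\infty}\sup\{\mathrm{E}(u) : u\in\mathrm{Fact}_n(w)\}$. $\mathcal{I}$ is the set of injective morphisms $\Sigma^*\to\Gamma^*$ and $\mathrm{ACE}_{\mathcal{I}}(w) = \sup\{\mathrm{ACE}(h(w)) : h\in\mathcal{I}\}$. *)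

From HB Require Import structures.
From mathcomp Require Import all_boot all_order all_algebra.
From mathcomp Require Import all_classical all_reals.
From mathcomp Require Import ereal topology normedtype sequences.
Set Implicit Arguments. Unset Strict Implicit. Unset Printing Implicit Defensive.
Import Order.TTheory GRing.Theory Num.Theory.
Local Open Scope classical_set_scope.
Local Open Scope ring_scope.

Definition hstar (Sigma Gamma : finType) (h : Sigma -> seq Gamma)
  (u : seq Sigma) : seq Gamma := flatten (map h u).

Definition inj_morph (Sigma Gamma : finType) (h : Sigma -> seq Gamma) : Prop :=
  injective (hstar h).

Definition Fact (A : Type) (n : nat) (x : nat -> A) : set (seq A) :=
  [set u | exists i : nat, u = mkseq (fun k => x (i + k)%N) n].

(* v^(p/|v|) : prefix of length p of v v v ... *)
Definition fpow (A : Type) (v : seq A) (p : nat) : seq A :=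
  take p (flatten (nseq p v)).

Definition is_pow (A : Type) (u v : seq A) (r : rat) : Prop :=
  (0 < size v)%N /\ exists p : nat, r = (p%:R / (size v)%:R)%R /\ u = fpow v p.

Definition Eexp (R : realType) (A : Type) (u : seq A) : \bar R :=
  ereal_sup [set ((ratr r : R)%:E) | r in [set r : rat | exists v, is_pow u v r]].

Definition ACE (R : realType) (A : Type) (x : nat -> A) : \bar R :=
  limn_esup (fun n => ereal_sup [set Eexp R u | u in Fact n x]).

Definition pref (A : Type) (m : nat) (w : nat -> A) : seq A := mkseq w m.

(* x is the infinite word h(w): every h(w[0..m)) is a prefix of x.
   (For nonerasing h, in particular injective h, this determines x uniquely.) *)
Definition is_morph_image (Sigma Gamma : finType) (h : Sigma -> seq Gamma)
  (w : nat -> Sigma) (x : nat -> Gamma) : Prop :=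
  forall m i, (i < size (hstar h (pref m w)))%N ->
    nth (x i) (hstar h (pref m w)) i = x i.

Definition ACE_I (R : realType) (Sigma Gamma : finType) (w : nat -> Sigma) : \bar R :=
  ereal_sup [set ACE R x | x in
    [set x : nat -> Gamma | exists h : Sigma -> seq Gamma,
        inj_morph h /\ is_morph_image h w x]].

From mathcomp Require Import all_boot all_order all_algebra.
From mathcomp Require Import all_classical all_reals.
From mathcomp Require Import ereal topology normedtype sequences.
From mathcomp Require Import zify lra.
Import Order.TTheory GRing.Theory Num.Theory.
Set Implicit Arguments. Unset Strict Implicit. Unset Printing Implicit Defensive.
Local Open Scope classical_set_scope.
Local Open Scope ring_scope.

(* For a nonerasing morphism h and x = h(w), ACE(x) is already the limsup of
   max{E(h(f)) : f a length-n factor of w}; the theorem follows by taking the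
   supremum over injective h.  Images of length-n factors of w are factors of x of length at
   least n, which gives one inequality.  Conversely, let c be the maximal length
   of a letter image.  A factor u of x of length m and period q contains the
   image h(f) of a factor f of w with |h(f)| >= m - 2c; h(f) inherits the period
   q, so E(h(f)) >= (m - 2c)/q while E(u) = m/q.  As m grows, m/(m - 2c) tends
   to 1 and |f| >= (m - 2c)/c tends to infinity, so the two limsups agree. *)

Definition periodic (A : Type) (q : nat) (y : seq A) :=
  forall d t, (t + q < size y)%N -> nth d y t = nth d y (t + q).

Lemma size_flatten_nseq (A : Type) (v : seq A) p :
  size (flatten (nseq p v)) = (p * size v)%N.
Proof. by elim: p => //= p IH; rewrite size_cat IH mulSn. Qed.

Lemma nth_flatten_nseq (A : Type) (d : A) (v : seq A) p t :
  (t < p * size v)%N -> nth d (flatten (nseq p v)) t = nth d v (t %% size v).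
Proof.
elim: p t => [|p IH] t; first by rewrite mul0n.
rewrite mulSn /= nth_cat => ht.
case: ifP => htv; first by rewrite modn_small.
have hq : (size v <= t)%N by rewrite leqNgt htv.
rewrite IH; last by lia.
by rewrite -{2}(subnK hq) modnDr.
Qed.

Lemma size_fpow (A : Type) (v : seq A) p : (0 < size v)%N -> size (fpow v p) = p.
Proof.
move=> hv; rewrite /fpow size_takel // size_flatten_nseq.
by rewrite -{1}(muln1 p) leq_mul2l hv orbT.
Qed.

Lemma nth_fpow (A : Type) (d : A) (v : seq A) p t : (0 < size v)%N -> (t < p)%N ->
  nth d (fpow v p) t = nth d v (t %% size v).
Proof.
move=> hv ht; rewrite /fpow nth_take // nth_flatten_nseq //.
by apply: (leq_trans ht); rewrite -{1}(muln1 p) leq_mul2l hv orbT.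
Qed.

Lemma periodic_nth_mod (A : Type) (d : A) q (y : seq A) : (0 < q)%N -> periodic q y ->
  forall t, (t < size y)%N -> nth d y t = nth d y (t %% q).
Proof.
move=> hq hp; elim/ltn_ind=> t IH hty.
case: (ltnP t q) => htq; first by rewrite modn_small.
have -> : t = ((t - q) + q)%N by lia.
rewrite -hp; last by lia.
by rewrite modnDr IH //; lia.
Qed.

Lemma fpow_take_periodic (A : Type) q (y : seq A) : (0 < q)%N -> periodic q y ->
  fpow (take q y) (size y) = y.
Proof.
move=> hq hp; case: (posnP (size y)) => [/size0nil -> //|hy].
have [d _] : exists d : A, True by case: y hy {hp} => // a; exists a.
have hv : (0 < size (take q y))%N by rewrite size_take_min leq_min hq.
apply: (@eq_from_nth _ d); first by rewrite size_fpow.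
move=> t; rewrite size_fpow // => ht; rewrite nth_fpow // size_take_min.
case: (leqP q (size y)) => hqy.
  by rewrite nth_take ?ltn_mod // -(periodic_nth_mod _ hq hp ht).
by rewrite modn_small // nth_take // (ltn_trans ht hqy).
Qed.

Lemma is_pow_periodic (A : Type) (u v : seq A) r : is_pow u v r ->
  r = (size u)%:R / (size v)%:R /\ periodic (size v) u.
Proof.
case=> hv [p [-> ->]]; rewrite size_fpow //; split => // d t.
rewrite size_fpow // => ht; rewrite !nth_fpow //; last by lia.
by rewrite modnDr.
Qed.

Lemma Eexp_ge_periodic (R : realType) (A : Type) q (y : seq A) :
  (0 < q)%N -> (0 < size y)%N -> periodic q y ->
  (((size y)%:R / q%:R : R)%:E <= Eexp R y)%E.
Proof.
move=> hq hy hp; set v := take q y.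
have hvq : (size v <= q)%N by rewrite size_take_min geq_minl.
have hv : (0 < size v)%N by rewrite size_take_min; lia.
apply: (@le_trans _ _ (ratr ((size y)%:R / (size v)%:R : rat) : R)%:E).
  rewrite fmorph_div !rmorph_nat lee_fin ler_pM2l ?ltr0n //.
  by rewrite lef_pV2 ?posrE ?ltr0n // ler_nat.
apply: ereal_sup_ubound; exists ((size y)%:R / (size v)%:R) => //.
exists v; split => //; exists (size y); split => //.
by rewrite fpow_take_periodic.
Qed.

Definition factor (A : Type) (x : nat -> A) (i n : nat) : seq A :=
  mkseq (fun k => x (i + k)%N) n.

Lemma periodic_subfactor (A : Type) (x : nat -> A) q i n i' n' :
  (i <= i')%N -> (i' + n' <= i + n)%N ->
  periodic q (factor x i n) -> periodic q (factor x i' n').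
Proof.
move=> hi hn hp d t; rewrite size_mkseq => ht.
have := hp d (i' - i + t)%N; rewrite size_mkseq !nth_mkseq; try lia.
by rewrite !addnA subnKC //; apply; lia.
Qed.

Lemma pref_add (A : Type) (w : nat -> A) i n :
  pref (i + n) w = pref i w ++ factor w i n.
Proof.
rewrite /pref /factor /mkseq iotaD map_cat add0n; congr (_ ++ _).
by rewrite -{1}(addn0 i) iotaDl -map_comp.
Qed.

Section Morphism.
Variables (S G : finType) (h : S -> seq G).

Definition nonerasing := forall a, (0 < size (h a))%N.

Definition maxlen := (\max_(a : S) size (h a))%N.

Lemma inj_morph_nonerasing : inj_morph h -> nonerasing.
Proof.
move=> hi a; rewrite lt0n size_eq0; apply/eqP => ha.
have : hstar h [:: a] = hstar h [::] by rewrite /hstar /= ha.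
by move/hi.
Qed.

Lemma hstar_cat s1 s2 : hstar h (s1 ++ s2) = hstar h s1 ++ hstar h s2.
Proof. by rewrite /hstar map_cat flatten_cat. Qed.

Lemma size_hstar_ge s : nonerasing -> (size s <= size (hstar h s))%N.
Proof.
move=> hne; elim: s => //= a s IH.
by rewrite /hstar /= size_cat -/(hstar h s); have := hne a; lia.
Qed.

Lemma size_hstar_le s : (size (hstar h s) <= maxlen * size s)%N.
Proof.
elim: s => [|a s IH]; first by rewrite /hstar /= muln0.
rewrite /hstar /= size_cat -/(hstar h s) mulnS.
by apply: leq_add => //; apply: leq_bigmax.
Qed.

Variable w : nat -> S.

Definition hpos i := size (hstar h (pref i w)).

Lemma hpos_add i n : hpos (i + n) = (hpos i + size (hstar h (factor w i n)))%N.
Proof. by rewrite /hpos pref_add hstar_cat size_cat. Qed.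

Lemma hpos_S i : hpos i.+1 = (hpos i + size (h (w i)))%N.
Proof. by rewrite -addn1 hpos_add /factor /mkseq /= /hstar /= cats0 addn0. Qed.

Lemma hpos_mono i k : (i <= k)%N -> (hpos i <= hpos k)%N.
Proof. by move=> hik; rewrite -(subnKC hik) hpos_add leq_addr. Qed.

Lemma hpos_block j : nonerasing -> exists i, (hpos i <= j < hpos i.+1)%N.
Proof.
move=> hne; elim: j => [|j [i /andP[h1 h2]]].
  by exists 0%N; rewrite hpos_S /hpos /pref /= /hstar /= add0n hne.
case: (ltnP j.+1 (hpos i.+1)) => h3; first by exists i; rewrite h3 andbT; lia.
by exists i.+1; rewrite h3 /= hpos_S; have := hne (w i.+1); lia.
Qed.

Lemma factor_image_in_window j m : nonerasing -> (2 * maxlen <= m)%N ->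
  exists i n, [/\ (j <= hpos i)%N,
    (hpos i + size (hstar h (factor w i n)) <= j + m)%N &
    (m - 2 * maxlen <= size (hstar h (factor w i n)))%N].
Proof.
move=> hne hm.
have [i /andP[a1 a2]] := hpos_block j hne.
have [k /andP[b1 b2]] := hpos_block (j + m) hne.
have e1 := hpos_S i; have e2 := hpos_S k.
have c1 : (size (h (w i)) <= maxlen)%N by apply: leq_bigmax.
have c2 : (size (h (w k)) <= maxlen)%N by apply: leq_bigmax.
have hik : (i.+1 <= k)%N.
  by rewrite leqNgt; apply/negP => /hpos_mono; lia.
exists i.+1, (k - i.+1)%N; have := hpos_add i.+1 (k - i.+1).
by rewrite subnKC //; split; lia.
Qed.

Lemma nth_hstar_pref (d : G) a b t : (a <= b)%N ->
  (t < size (hstar h (pref a w)))%N ->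
  nth d (hstar h (pref a w)) t = nth d (hstar h (pref b w)) t.
Proof. by move=> hab ht; rewrite -(subnKC hab) pref_add hstar_cat nth_cat ht. Qed.

Lemma morph_image_exists : nonerasing -> exists x, is_morph_image h w x.
Proof.
move=> hne; have := hne (w 0%N); case: (h (w 0%N)) => [|d _] // _.
exists (fun t => nth d (hstar h (pref t.+1 w)) t) => m t ht.
have ht1 : (t < hpos t.+1)%N.
  by apply: leq_trans (size_hstar_ge _ hne); rewrite size_mkseq.
rewrite (nth_hstar_pref _ (leq_maxl m t.+1) ht).
rewrite (nth_hstar_pref d (leq_maxr m t.+1) ht1).
by apply: set_nth_default; apply: leq_trans ht1 (hpos_mono (leq_maxr m t.+1)).
Qed.

Variable x : nat -> G.
Hypothesis hx : is_morph_image h w x.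

Lemma morph_pref i : hstar h (pref i w) = mkseq x (hpos i).
Proof.
case E: (hstar h (pref i w)) => [|a s]; first by rewrite /hpos E.
apply: (@eq_from_nth _ a); first by rewrite size_mkseq /hpos E.
move=> t ht; rewrite nth_mkseq; last by rewrite /hpos E.
by rewrite -E (set_nth_default (x t)) ?hx // E.
Qed.

Lemma morph_factor i n :
  hstar h (factor w i n) = factor x (hpos i) (size (hstar h (factor w i n))).
Proof.
have E2 := morph_pref (i + n).
rewrite pref_add hstar_cat morph_pref hpos_add in E2.
set f := hstar h (factor w i n) in E2 *.
case Ef: f => [|a s] //.
apply: (@eq_from_nth _ a); first by rewrite size_mkseq.
move=> t ht; rewrite nth_mkseq // -Ef.
have := congr1 (fun s => nth a s (hpos i + t)) E2 => /=.
rewrite nth_cat size_mkseq ltnNge leq_addr /= addKn => ->.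
by rewrite nth_mkseq // ltn_add2l Ef.
Qed.

End Morphism.

Lemma div_le_of_sub_div_lt (R : realFieldType) (l e c m q : R) :
  0 <= l -> 0 < e -> 0 < q -> 4 * c * (l + e) <= m * e ->
  (m - 2 * c) / q < l + e / 2 -> m / q <= l + e.
Proof.
move=> l0 e0 q0 hm; rewrite ltr_pdivrMr // ler_pdivrMr // => hlt.
rewrite leNgt; apply/negP => hgt.
(* otherwise (m - 2c)(l + e) < q (l + e/2)(l + e) < m (l + e/2), i.e. m e < 4c(l + e) *)
nra.
Qed.

Local Open Scope ereal_scope.

Lemma limn_esup_inf (R : realType) (u : (\bar R)^nat) :
  limn_esup u = ereal_inf (range (esups u)).
Proof. by rewrite limn_esup_lim; apply: cvg_lim => //; exact: cvg_esups_inf. Qed.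

Section ExponentsOfImage.
Variables (R : realType) (S G : finType) (h : S -> seq G) (w : nat -> S) (x : nat -> G).
Hypotheses (hne : nonerasing h) (hx : is_morph_image h w x).

Local Notation imgE := (fun n => ereal_sup [set Eexp R (hstar h f) | f in Fact n w]).
Local Notation factE := (fun n => ereal_sup [set Eexp R u | u in Fact n x]).

Lemma Eexp_image_le_esups n0 n f :
  (n0 <= n)%N -> Fact n w f -> Eexp R (hstar h f) <= esups imgE n0.
Proof.
move=> hn hf; apply: (@le_trans _ _ (imgE n)).
  by apply: ereal_sup_ubound; exists f.
by apply: ereal_sup_ubound; exists n.
Qed.

Lemma esups_image_le n : esups imgE n <= esups factE n.
Proof.
apply: ge_ereal_sup => _ [k /= hk <-].
apply: ge_ereal_sup => _ [_ [i ->] <-]; rewrite -/(factor w i k).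
set L := size (hstar h (factor w i k)).
apply: (@le_trans _ _ (factE L)).
  apply: ereal_sup_ubound; exists (hstar h (factor w i k)) => //.
  by exists (hpos h w i); exact: morph_factor.
apply: ereal_sup_ubound; exists L => //=.
by have := size_hstar_ge (factor w i k) hne; rewrite size_mkseq; lia.
Qed.

Lemma limsup_image_le_ACE : limn_esup imgE <= ACE R x.
Proof.
rewrite /ACE !limn_esup_inf; apply: le_ereal_inf_tmp => _ [n _ <-].
by apply: le_trans (esups_image_le n); apply: ereal_inf_lbound; exists n.
Qed.

Lemma limsup_image_ge0 : 0 <= limn_esup imgE.
Proof.
rewrite limn_esup_inf; apply: le_ereal_inf_tmp => _ [n _ <-].
set f := factor w 0 n.+1.
have hy : (0 < size (hstar h f))%N.
  by apply: leq_trans (size_hstar_ge _ hne); rewrite size_mkseq.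
apply: le_trans (Eexp_image_le_esups (leqnSn n) (ex_intro _ 0%N erefl)).
apply: le_trans (Eexp_ge_periodic R hy hy _); last by move=> d t; lia.
by rewrite lee_fin divr_ge0.
Qed.

Lemma factor_pow_image m j (v : seq G) r :
  (2 * maxlen h < m)%N -> is_pow (factor x j m) v r ->
  exists n f, [/\ (m - 2 * maxlen h <= maxlen h * n)%N, Fact n w f,
    (r = m%:R / (size v)%:R)%R &
    (((m - 2 * maxlen h)%:R / (size v)%:R : R)%:E <= Eexp R (hstar h f))].
Proof.
move=> hm hpow; have [hv _] := hpow.
have [-> hper] := is_pow_periodic hpow; rewrite size_mkseq in hper *.
have [i [n [hj hle hL]]] := factor_image_in_window w j hne (ltnW hm).
set y := hstar h (factor w i n) in hle hL *.
exists n, (factor w i n); split => //.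
- by have := size_hstar_le h (factor w i n); rewrite size_mkseq -/y; lia.
- by exists i.
have hy : (0 < size y)%N by lia.
have hpy : periodic (size v) y.
  have -> : y = factor x (hpos h w i) (size y) := morph_factor hx i n.
  by apply: periodic_subfactor hper; lia.
apply: le_trans (Eexp_ge_periodic R hv hy hpy).
by rewrite lee_fin ler_pM2r ?invr_gt0 ?ltr0n // ler_nat.
Qed.

Lemma ACE_le_limsup_image : ACE R x <= limn_esup imgE.
Proof.
case E: (limn_esup imgE) => [l| |]; last 2 first.
- exact: leey.
- by have := limsup_image_ge0; rewrite E.
have l0 : (0 <= l)%R by rewrite -lee_fin -E limsup_image_ge0.
rewrite /ACE limn_esup_inf; apply/lee_addgt0Pr => e e0.
have : ereal_inf (range (esups imgE)) < (l + e / 2)%:E.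
  by rewrite -limn_esup_inf E lte_fin; lra.
move/ereal_inf_lt => [_ [n0 _ <-] hn0].
set c := maxlen h.
have c1 : (1 <= c)%N by apply: leq_trans (hne (w 0%N)) (leq_bigmax _).
have B0 : (0 <= 4 * c%:R * (l + e) / e)%R.
  by rewrite divr_ge0 ?(ltW e0) // !mulr_ge0 //; lra.
have hK := archi_boundP B0; set K := Num.Def.archi_bound _ in hK.
(* N ensures m e >= 4c(l + e), m > 2c and, via c |f| >= m - 2c, |f| >= n0. *)
set N := (K + c * n0 + 2 * c).+1.
apply: (@le_trans _ _ (esups factE N)); first by apply: ereal_inf_lbound; exists N.
apply: ge_ereal_sup => _ [m /= hm <-].
apply: ge_ereal_sup => _ [_ [j ->] <-].
apply: ge_ereal_sup => _ [r [v hv] <-].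
have [|n [f [hn hf -> hE]]] := factor_pow_image (m := m) (j := j) _ hv; first by lia.
have hn0n : (n0 <= n)%N by rewrite -(leq_pmul2l c1); lia.
have := le_lt_trans (le_trans hE (Eexp_image_le_esups hn0n hf)) hn0.
rewrite fmorph_div !rmorph_nat -EFinD lee_fin lte_fin natrB ?natrM; last by lia.
apply: div_le_of_sub_div_lt => //; first by rewrite ltr0n; have := hv.1.
rewrite -ler_pdivrMr //; apply: (le_trans (ltW hK)); rewrite ler_nat; lia.
Qed.

Lemma ACE_morph_image : ACE R x = limn_esup imgE.
Proof. by apply/eqP; rewrite eq_le ACE_le_limsup_image limsup_image_le_ACE. Qed.

End ExponentsOfImage.

Theorem theorem19 (R : realType) (Sigma Gamma : finType)
    (hSigma : (1 < #|Sigma|)%N) (hGamma : (1 < #|Gamma|)%N) (w : nat -> Sigma) :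
  ACE_I R Gamma w =
  ereal_sup [set limn_esup
                (fun n => ereal_sup [set Eexp R (hstar h f) | f in Fact n w])
             | h in [set h : Sigma -> seq Gamma | inj_morph h]].
Proof.
rewrite /ACE_I; congr ereal_sup; apply/seteqP; split.
- move=> _ [x [h [hi hx]] <-]; exists h => //.
  by rewrite (ACE_morph_image R (inj_morph_nonerasing hi) hx).
- move=> _ [h hi <-]; have hne := inj_morph_nonerasing hi.
  have [x hx] := morph_image_exists w hne.
  by exists x; [exists h | rewrite (ACE_morph_image R hne hx)].
Qed.
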